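(* (Structure of pre-$\mathbb{Z}/2\mathbb{Z}$-Frobenius manifolds.) With $H$, $\eta$, $Y$ constructed as in the context, suppose that $Y$ has $G$-degree $e$ as an element of $\mathrm{T}\llbracket H^\ast\rrbracket=\prod_n (H^\ast)^{\otimes n}$, and that $\eta_i,\eta_v,\eta_g$ are $S^2$-homogeneous of degrees $(i,i)$, $(v,v)$, $(g,g)$ respectively. Then $((H,\rho),\eta,Y)$ is a pre-$\mathbb{Z}/2\mathbb{Z}$-Frobenius manifold. Conversely, the $\eta$ and $Y$ of any pre-$\mathbb{Z}/2\mathbb{Z}$-Frobenius manifold $((H,\rho),\eta,Y)$ are of this form, and are uniquely determined by the metrics and potentials of the two Frobenius manifolds it contains (on $H_e$ and on $H^G$).
   Context: $G=\mathbb{Z}/2\mathbb{Z}=\{e,g\}$, $k$ a field of characteristic zero. Let $(H_e,\eta_e,Y_e)$ and $(H^G,\eta^G,Y^G)$ be formal Frobenius manifolds (potentials in the power series ring satisfying WDVV). Suppose there is a vector space $H_i$ with linear injections $\iota_e:H_i\to H_e$, $\iota^G:H_i\to H^G$ such that $\iota_e^\ast Y_e=(\iota^G)^\ast Y^G=:Y_i$ and $\iota_e^\ast\eta_e=(\iota^G)^\ast\eta^G=:\eta_i$. Fix decompositions $H_e=H_i\oplus H_v$, $H^G=H_i\oplus H_g$, and write $Y_e=Y_i+Y_v$, $Y^G=Y_i+Y_g$, $\eta_e=\eta_i+\eta_v$, $\eta^G=\eta_i+\eta_g$ with $\iota_e^\ast Y_v=(\iota^G)^\ast Y_g=0$ and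 $\iota_e^\ast\eta_v=(\iota^G)^\ast\eta_g=0$. Let $H:=H_i\oplus H_v\oplus H_g$ be the $\mathbb{Z}/2\mathbb{Z}$-graded $\mathbb{Z}/2\mathbb{Z}$-module with $H_e=H_i\oplus H_v$ in degree $e$, $H_g$ in degree $g$, where $g$ acts trivially on $H_i$ and $H_g$ and by $-1$ on $H_v$. Set $Y:=Y_i+Y_v+Y_g$ and $\eta:=\eta_i+\eta_v+\eta_g$, extended by zero. With $S=\{i,v,g\}$, homogeneous terms have $S^n$-degrees. A pre-$G$-Frobenius manifold $((H,\rho),\eta,Y)$ is: a finite dimensional self-invariant $G$-graded $G$-module, a $G$-invariant nondegenerate symmetric bilinear form $\eta$ preserving the $G$-grading, and $Y=\sum_{n\ge3}Y^n$ with each $Y^n$ a $B_n$-invariant $n$-linear form on $H$ of $G$-degree $e$ (with $B_n$ acting through the braiding $v\otimes w\mapsto (h\cdot w)\otimes v$ for $v\in H_h$), such that the restrictions of $Y$ and $\eta$ to $H_e$ and to $H^G$ are formal Frobenius manifolds. *)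

From HB Require Import structures.
From mathcomp Require Import all_boot all_order all_algebra.
Set Implicit Arguments.
Unset Strict Implicit.
Unset Printing Implicit Defensive.
Import GRing.Theory.
Local Open Scope ring_scope.

(* An n-linear form on H for every n is encoded as a single function
   Y : seq H -> k ; the n-linear form Y^n is Y restricted to lists of size n.
   A bilinear form is a function H -> H -> k. *)

Section Defs.
Variables (k : fieldType) (H : vectType k).

Definition inU (U : {vspace H}) (s : seq H) : bool := all (fun x => x \in U) s.

Definition multilinear_on (U : {vspace H}) (Y : seq H -> k) : Prop :=
  forall (s1 s2 : seq H) (a : k) (x y : H),
    inU U s1 -> inU U s2 -> x \in U -> y \in U ->
    Y (s1 ++ (a *: x + y) :: s2) = a * Y (s1 ++ x :: s2) + Y (s1 ++ y :: s2).

Definition symmetric_on (U : {vspace H}) (Y : seq H -> k) : Prop :=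
  forall s t : seq H, inU U s -> perm_eq s t -> Y s = Y t.

(* Y = sum_{n >= 3} Y^n with Y^n symmetric n-linear : an element of the
   formal power series ring k[[U^*]] (char 0), without terms of degree < 3 *)
Definition potential_on (U : {vspace H}) (Y : seq H -> k) : Prop :=
  [/\ multilinear_on U Y, symmetric_on U Y &
      forall s, inU U s -> (size s < 3)%N -> Y s = 0].

Definition bilinear_on (U : {vspace H}) (eta : H -> H -> k) : Prop :=
  (forall (a : k) (x y z : H), x \in U -> y \in U -> z \in U ->
     eta (a *: x + y) z = a * eta x z + eta y z) /\
  (forall (a : k) (x y z : H), x \in U -> y \in U -> z \in U ->
     eta z (a *: x + y) = a * eta z x + eta z y).

Definition symmetric_bil_on (U : {vspace H}) (eta : H -> H -> k) : Prop :=
  forall x y, x \in U -> y \in U -> eta x y = eta y x.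

Definition nondeg_on (U : {vspace H}) (eta : H -> H -> k) : Prop :=
  forall x, x \in U -> (forall y, y \in U -> eta x y = 0) -> x = 0.

(* b is a basis of U and c is its eta-dual basis: sum_i b_i (x) c_i is the
   inverse metric eta^{-1} *)
Definition dual_bases_on (U : {vspace H}) (eta : H -> H -> k) (b c : seq H) :=
  [/\ basis_of U b, size c = size b, inU U c &
      forall i j, (i < size b)%N -> (j < size b)%N ->
        eta (nth 0 b i) (nth 0 c j) = (i == j)%:R].

(* WDVV for Phi = sum_n Y^n(x,..,x)/n!, written componentwise:
   Phi_{a1 a2 e} eta^{ef} Phi_{f a3 a4} = Phi_{a1 a3 e} eta^{ef} Phi_{f a2 a4},
   polarized in the point x (sum over splittings of x_1..x_n). *)
Definition WDVV_on (U : {vspace H}) (eta : H -> H -> k) (Y : seq H -> k) : Prop :=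
  forall (b c : seq H), dual_bases_on U eta b c ->
  forall (xs : seq H) (a1 a2 a3 a4 : H),
    inU U xs -> inU U [:: a1; a2; a3; a4] ->
    \sum_(m : (size xs).-tuple bool) \sum_(i < size b)
        Y (a1 :: a2 :: mask m xs ++ [:: nth 0 b i]) *
        Y (nth 0 c i :: mask (map negb m) xs ++ [:: a3; a4])
    = \sum_(m : (size xs).-tuple bool) \sum_(i < size b)
        Y (a1 :: a3 :: mask m xs ++ [:: nth 0 b i]) *
        Y (nth 0 c i :: mask (map negb m) xs ++ [:: a2; a4]).

Definition formal_frobenius_on (U : {vspace H}) (eta : H -> H -> k)
    (Y : seq H -> k) : Prop :=
  [/\ bilinear_on U eta, symmetric_bil_on U eta, nondeg_on U eta,
      potential_on U Y & WDVV_on U eta Y].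

Definition fixed_space (rho : 'End(H)) : {vspace H} := lker (rho - \1%VF).

(* pre-Z/2Z-Frobenius manifold ((H, rho), eta, Y); H0 = H_e, H1 = H_g is the
   Z/2Z-grading, rho is the action of g. *)
Definition pre_Z2_frobenius (H0 H1 : {vspace H}) (rho : 'End(H))
    (eta : H -> H -> k) (Y : seq H -> k) : Prop :=
  [/\ directv (H0 + H1) /\ (H0 + H1)%VS = fullv,
      [/\ forall x, rho (rho x) = x,
          forall x, x \in H0 -> rho x \in H0 &
          forall x, x \in H1 -> rho x \in H1],
      (forall x, x \in H1 -> rho x = x) /\
      [/\ bilinear_on fullv eta, symmetric_bil_on fullv eta,
          nondeg_on fullv eta,
          forall x y, eta (rho x) (rho y) = eta x y &
          forall x y, x \in H0 -> y \in H1 -> eta x y = 0],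
      (* Y = sum_{n>=3} Y^n, multilinear, B_n-invariant, of G-degree e *)
      [/\ multilinear_on fullv Y,
          (forall s, (size s < 3)%N -> Y s = 0),
          (forall s1 s2 v w, v \in H0 ->
             Y (s1 ++ v :: w :: s2) = Y (s1 ++ w :: v :: s2)),
          (forall s1 s2 v w, v \in H1 ->
             Y (s1 ++ v :: w :: s2) = Y (s1 ++ rho w :: v :: s2)) &
          (forall s, all (fun x => (x \in H0) || (x \in H1)) s ->
             odd (count (fun x => x \in H1) s) -> Y s = 0)] &
      formal_frobenius_on H0 eta Y /\
      formal_frobenius_on (fixed_space rho) eta Y].

Definition pr_i (Hi Hv Hg : {vspace H}) : 'End(H) := daddv_pi Hi (Hv + Hg).
Definition pr_v (Hi Hv Hg : {vspace H}) : 'End(H) := daddv_pi Hv (Hi + Hg).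
Definition pr_g (Hi Hv Hg : {vspace H}) : 'End(H) := daddv_pi Hg (Hi + Hv).
Definition pr_e Hi Hv Hg (x : H) : H := pr_i Hi Hv Hg x + pr_v Hi Hv Hg x.
Definition pr_G Hi Hv Hg (x : H) : H := pr_i Hi Hv Hg x + pr_g Hi Hv Hg x.

Definition glue_rho (Hi Hv Hg : {vspace H}) : 'End(H) :=
  (pr_i Hi Hv Hg - pr_v Hi Hv Hg + pr_g Hi Hv Hg)%R.

Definition Yi_of Hi Hv Hg (Ye : seq H -> k) (s : seq H) : k :=
  Ye (map (pr_i Hi Hv Hg) s).
Definition Yv_of Hi Hv Hg (Ye : seq H -> k) (s : seq H) : k :=
  Ye (map (pr_e Hi Hv Hg) s) - Ye (map (pr_i Hi Hv Hg) s).
Definition Yg_of Hi Hv Hg (YG : seq H -> k) (s : seq H) : k :=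
  YG (map (pr_G Hi Hv Hg) s) - YG (map (pr_i Hi Hv Hg) s).
Definition glue_pot Hi Hv Hg (Ye YG : seq H -> k) (s : seq H) : k :=
  Yi_of Hi Hv Hg Ye s + Yv_of Hi Hv Hg Ye s + Yg_of Hi Hv Hg YG s.

Definition etai_of Hi Hv Hg (etae : H -> H -> k) (x y : H) : k :=
  etae (pr_i Hi Hv Hg x) (pr_i Hi Hv Hg y).
Definition etav_of Hi Hv Hg (etae : H -> H -> k) (x y : H) : k :=
  etae (pr_e Hi Hv Hg x) (pr_e Hi Hv Hg y)
  - etae (pr_i Hi Hv Hg x) (pr_i Hi Hv Hg y).
Definition etag_of Hi Hv Hg (etaG : H -> H -> k) (x y : H) : k :=
  etaG (pr_G Hi Hv Hg x) (pr_G Hi Hv Hg y)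
  - etaG (pr_i Hi Hv Hg x) (pr_i Hi Hv Hg y).
Definition glue_met Hi Hv Hg (etae etaG : H -> H -> k) (x y : H) : k :=
  etai_of Hi Hv Hg etae x y + etav_of Hi Hv Hg etae x y
  + etag_of Hi Hv Hg etaG x y.

Definition eta_homogeneous Hi Hv Hg (etae etaG : H -> H -> k) : Prop :=
  [/\ forall x y, etai_of Hi Hv Hg etae x y =
        etai_of Hi Hv Hg etae (pr_i Hi Hv Hg x) (pr_i Hi Hv Hg y),
      forall x y, etav_of Hi Hv Hg etae x y =
        etav_of Hi Hv Hg etae (pr_v Hi Hv Hg x) (pr_v Hi Hv Hg y) &
      forall x y, etag_of Hi Hv Hg etaG x y =
        etag_of Hi Hv Hg etaG (pr_g Hi Hv Hg x) (pr_g Hi Hv Hg y)].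

Definition Gdegree_e (He Hg : {vspace H}) (Y : seq H -> k) : Prop :=
  forall s, all (fun x => (x \in He) || (x \in Hg)) s ->
    odd (count (fun x => x \in Hg) s) -> Y s = 0.

Definition triple_decomp (Hi Hv Hg : {vspace H}) : Prop :=
  directv (Hi + Hv + Hg) /\ (Hi + Hv + Hg)%VS = fullv.

End Defs.

(* Everything is read off the three projections of H = Hi (+) Hv (+) Hg.
   Forwards, the glued metric is the orthogonal sum of its Hi-, Hv- and
   Hg-parts and the glued potential is Ye o pr_e + YG o pr_G - YG o pr_i, so
   every axiom of a pre-Z/2-Frobenius manifold is inherited from the two
   Frobenius manifolds.  Conversely, in characteristic 0, Hi and Hv are the
   (+1)- and (-1)-eigenspaces of g on H_e; braiding an Hg-slot past an
   Hv-slot changes the sign of Y while an Hv-slot commutes freely, so no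
   component of Y (nor of eta, by invariance) mixes Hv and Hg.  Inclusion-
   exclusion then writes eta and Y in the glued form, which depends only on
   their restrictions to H_e and H^G: this is the uniqueness. *)

From HB Require Import structures.
From mathcomp Require Import all_boot all_order all_algebra.
From mathcomp Require Import ring.
Set Implicit Arguments. Unset Strict Implicit. Unset Printing Implicit Defensive.
Import GRing.Theory.
Local Open Scope ring_scope.

Lemma double_eq0 (k : fieldType) (V : lmodType k) (x : V) :
  [pchar k] =i pred0 -> x + x = 0 -> x = 0.
Proof.
move=> k_char0 /eqP; rewrite -mulr2n -scaler_nat scaler_eq0 => /orP[|/eqP //].
by move/pcharf0P: k_char0 => ->.
Qed.

Lemma daddv_pi_eq0 (k : fieldType) (H : vectType k) (U V : {vspace H}) (v : H) :
  (U :&: V = 0)%VS -> v \in V -> daddv_pi U V v = 0.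
Proof.
move=> capUV Vv; have capVU : (V :&: U = 0)%VS by rewrite capvC.
have := daddv_pi_add capUV (memv_add (mem0v U) Vv).
by rewrite add0r (daddv_pi_id capVU Vv) => /(canRL (addrK v)); rewrite subrr.
Qed.

Lemma glue_potE (k : fieldType) (H : vectType k) (Hi Hv Hg : {vspace H})
    (Ye YG : seq H -> k) s :
  glue_pot Hi Hv Hg Ye YG s = Ye (map (pr_e Hi Hv Hg) s)
    + YG (map (pr_G Hi Hv Hg) s) - YG (map (pr_i Hi Hv Hg) s).
Proof. by rewrite /glue_pot /Yi_of /Yv_of /Yg_of; ring. Qed.

Lemma glue_metE (k : fieldType) (H : vectType k) (Hi Hv Hg : {vspace H})
    (etae etaG : H -> H -> k) x y :
  glue_met Hi Hv Hg etae etaG x y = etae (pr_e Hi Hv Hg x) (pr_e Hi Hv Hg y)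
    + etaG (pr_G Hi Hv Hg x) (pr_G Hi Hv Hg y)
    - etaG (pr_i Hi Hv Hg x) (pr_i Hi Hv Hg y).
Proof. by rewrite /glue_met /etai_of /etav_of /etag_of; ring. Qed.

Lemma mem_fixed_space (k : fieldType) (H : vectType k) (rho : 'End(H)) x :
  (x \in fixed_space rho) = (rho x == x).
Proof. by rewrite memv_ker add_lfunE opp_lfunE id_lfunE subr_eq0. Qed.

Section TripleDecomposition.
Variables (k : fieldType) (H : vectType k) (Hi Hv Hg : {vspace H}).
Hypothesis td : triple_decomp Hi Hv Hg.

Local Notation pi := (pr_i Hi Hv Hg).
Local Notation pv := (pr_v Hi Hv Hg).
Local Notation pg := (pr_g Hi Hv Hg).
Local Notation pe := (pr_e Hi Hv Hg).
Local Notation pG := (pr_G Hi Hv Hg).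

Lemma triple_cap_i : (Hi :&: (Hv + Hg) = 0)%VS.
Proof.
have : directv (Hi + (Hv + Hg)) by rewrite directvE /= addvA addnA; case: td.
by rewrite directv_addE => /and3P[_ _ /eqP].
Qed.

Lemma triple_cap_v : (Hv :&: (Hi + Hg) = 0)%VS.
Proof.
have : directv (Hv + (Hi + Hg)).
  by rewrite directvE /= addvA (addvC Hv Hi) addnCA addnA; case: td.
by rewrite directv_addE => /and3P[_ _ /eqP].
Qed.

Lemma triple_cap_g : (Hg :&: (Hi + Hv) = 0)%VS.
Proof.
have : directv (Hg + (Hi + Hv)) by rewrite directvE /= addvC addnC; case: td.
by rewrite directv_addE => /and3P[_ _ /eqP].
Qed.

Lemma pr_triple x a b c : a \in Hi -> b \in Hv -> c \in Hg -> x = a + b + c ->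
  [/\ pi x = a, pv x = b & pg x = c].
Proof.
move=> Ha Hb Hc ->; split.
- rewrite /pr_i -addrA linearD /= daddv_pi_id ?triple_cap_i //.
  by rewrite daddv_pi_eq0 ?addr0 ?triple_cap_i ?memv_add.
- rewrite /pr_v (addrC a) -addrA linearD /= daddv_pi_id ?triple_cap_v //.
  by rewrite daddv_pi_eq0 ?addr0 ?triple_cap_v ?memv_add.
- rewrite /pr_g addrC linearD /= daddv_pi_id ?triple_cap_g //.
  by rewrite daddv_pi_eq0 ?addr0 ?triple_cap_g ?memv_add.
Qed.

Lemma pr_i_in x : pi x \in Hi. Proof. exact: memv_pi. Qed.
Lemma pr_v_in x : pv x \in Hv. Proof. exact: memv_pi. Qed.
Lemma pr_g_in x : pg x \in Hg. Proof. exact: memv_pi. Qed.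

Lemma pr_decomp x : x = pi x + pv x + pg x.
Proof.
case: td => _ full; have : x \in (Hi + Hv + Hg)%VS by rewrite full memvf.
case/memv_addP => _ /memv_addP[a Ha [b Hb ->]] [c Hc Ex].
by have [-> -> ->] := pr_triple Ha Hb Hc Ex.
Qed.

Lemma pr_on_i a : a \in Hi -> [/\ pi a = a, pv a = 0 & pg a = 0].
Proof. by move=> Ha; apply: pr_triple Ha (mem0v _) (mem0v _) _; rewrite !addr0. Qed.

Lemma pr_on_v b : b \in Hv -> [/\ pi b = 0, pv b = b & pg b = 0].
Proof.
by move=> Hb; apply: pr_triple (mem0v _) Hb (mem0v _) _; rewrite addr0 add0r.
Qed.

Lemma pr_on_g c : c \in Hg -> [/\ pi c = 0, pv c = 0 & pg c = c].
Proof. by move=> Hc; apply: pr_triple (mem0v _) (mem0v _) Hc _; rewrite !add0r. Qed.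

Lemma pr_ii x : pi (pi x) = pi x. Proof. by case: (pr_on_i (pr_i_in x)). Qed.
Lemma pr_vi x : pv (pi x) = 0. Proof. by case: (pr_on_i (pr_i_in x)). Qed.
Lemma pr_gi x : pg (pi x) = 0. Proof. by case: (pr_on_i (pr_i_in x)). Qed.
Lemma pr_iv x : pi (pv x) = 0. Proof. by case: (pr_on_v (pr_v_in x)). Qed.
Lemma pr_vv x : pv (pv x) = pv x. Proof. by case: (pr_on_v (pr_v_in x)). Qed.
Lemma pr_gv x : pg (pv x) = 0. Proof. by case: (pr_on_v (pr_v_in x)). Qed.
Lemma pr_ig x : pi (pg x) = 0. Proof. by case: (pr_on_g (pr_g_in x)). Qed.
Lemma pr_vg x : pv (pg x) = 0. Proof. by case: (pr_on_g (pr_g_in x)). Qed.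
Lemma pr_gg x : pg (pg x) = pg x. Proof. by case: (pr_on_g (pr_g_in x)). Qed.

Lemma pr_e_pr_g x : x = pe x + pg x.
Proof. exact: pr_decomp. Qed.

Lemma pr_G_pr_v x : x = pG x + pv x.
Proof. by rewrite /pr_G addrAC -pr_decomp. Qed.

Lemma mem_He x : (x \in (Hi + Hv)%VS) = (pg x == 0).
Proof.
apply/idP/eqP => [/memv_addP[a Ha [b Hb ->]] | pg0].
  by rewrite -[_ + b]addr0; have [_ _ ->] := pr_triple Ha Hb (mem0v _) erefl.
by rewrite [x]pr_decomp pg0 addr0 memv_add ?pr_i_in ?pr_v_in.
Qed.

Lemma mem_HG x : (x \in (Hi + Hg)%VS) = (pv x == 0).
Proof.
apply/idP/eqP => [/memv_addP[a Ha [c Hc ->]] | pv0].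
  by rewrite -[a]addr0; have [_ -> _] := pr_triple Ha (mem0v _) Hc erefl.
by rewrite [x]pr_decomp pv0 addr0 memv_add ?pr_i_in ?pr_g_in.
Qed.

Lemma pr_e_in x : pe x \in (Hi + Hv)%VS.
Proof. exact: memv_add (pr_i_in x) (pr_v_in x). Qed.
Lemma pr_G_in x : pG x \in (Hi + Hg)%VS.
Proof. exact: memv_add (pr_i_in x) (pr_g_in x). Qed.
Lemma pr_i_in_e x : pi x \in (Hi + Hv)%VS.
Proof. exact: subvP (addvSl _ _) _ (pr_i_in x). Qed.
Lemma pr_v_in_e x : pv x \in (Hi + Hv)%VS.
Proof. exact: subvP (addvSr _ _) _ (pr_v_in x). Qed.
Lemma pr_i_in_G x : pi x \in (Hi + Hg)%VS.
Proof. exact: subvP (addvSl _ _) _ (pr_i_in x). Qed.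
Lemma pr_g_in_G x : pg x \in (Hi + Hg)%VS.
Proof. exact: subvP (addvSr _ _) _ (pr_g_in x). Qed.

Lemma pr_e_id x : x \in (Hi + Hv)%VS -> pe x = x.
Proof. by rewrite mem_He => /eqP pg0; rewrite [RHS]pr_e_pr_g pg0 addr0. Qed.
Lemma pr_G_on_e x : x \in (Hi + Hv)%VS -> pG x = pi x.
Proof. by rewrite mem_He => /eqP pg0; rewrite /pr_G pg0 addr0. Qed.
Lemma pr_G_id x : x \in (Hi + Hg)%VS -> pG x = x.
Proof. by rewrite mem_HG => /eqP pv0; rewrite [RHS]pr_G_pr_v pv0 addr0. Qed.
Lemma pr_e_on_G x : x \in (Hi + Hg)%VS -> pe x = pi x.
Proof. by rewrite mem_HG => /eqP pv0; rewrite /pr_e pv0 addr0. Qed.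

Lemma pr_e_linear : linear pe.
Proof. by move=> a x y; rewrite /pr_e !linearP scalerDr addrACA. Qed.
Lemma pr_G_linear : linear pG.
Proof. by move=> a x y; rewrite /pr_G !linearP scalerDr addrACA. Qed.

Lemma glue_rhoE x : glue_rho Hi Hv Hg x = pi x - pv x + pg x.
Proof. by rewrite /glue_rho !add_lfunE opp_lfunE. Qed.

Lemma pr_glue_rho x : [/\ pi (glue_rho Hi Hv Hg x) = pi x,
  pv (glue_rho Hi Hv Hg x) = - pv x & pg (glue_rho Hi Hv Hg x) = pg x].
Proof.
by apply: pr_triple (pr_i_in x) _ (pr_g_in x) (glue_rhoE x); rewrite memvN pr_v_in.
Qed.

End TripleDecomposition.

Arguments pr_i_in {k H Hi Hv Hg} x.
Arguments pr_v_in {k H Hi Hv Hg} x.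
Arguments pr_g_in {k H Hi Hv Hg} x.
Arguments pr_e_in {k H Hi Hv Hg} x.
Arguments pr_G_in {k H Hi Hv Hg} x.
Arguments pr_i_in_e {k H Hi Hv Hg} x.
Arguments pr_v_in_e {k H Hi Hv Hg} x.
Arguments pr_i_in_G {k H Hi Hv Hg} x.
Arguments pr_g_in_G {k H Hi Hv Hg} x.
Arguments pr_e_linear {k H Hi Hv Hg}.
Arguments pr_G_linear {k H Hi Hv Hg}.
Arguments glue_rhoE {k H Hi Hv Hg} x.

Section MultilinearForms.
Variables (k : fieldType) (H : vectType k).
Implicit Types (U : {vspace H}) (f : seq H -> k) (s p q : seq H).

Lemma inU_full s : inU fullv s.
Proof. by apply/allP => x _; apply: memvf. Qed.

Lemma inU_cat_cons U p x q :
  inU U (p ++ x :: q) = [&& inU U p, x \in U & inU U q].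
Proof. by rewrite /inU all_cat. Qed.

Lemma inU_map U (phi : H -> H) s : (forall x, phi x \in U) -> inU U (map phi s).
Proof. by move=> phiU; apply/allP => _ /mapP[x _ ->]. Qed.

Lemma multilinear_on0 U f p q : multilinear_on U f ->
  inU U p -> inU U q -> f (p ++ 0 :: q) = 0.
Proof.
move=> f_ml Up Uq; have := f_ml p q 1 0 0 Up Uq (mem0v U) (mem0v U).
by rewrite scaler0 addr0 mul1r => /eqP; rewrite -subr_eq subrr eq_sym => /eqP.
Qed.

Lemma multilinearD f p q x y : multilinear_on fullv f ->
  f (p ++ (x + y) :: q) = f (p ++ x :: q) + f (p ++ y :: q).
Proof. by move=> f_ml; rewrite -{1}(scale1r x) f_ml ?inU_full ?memvf // mul1r. Qed.

Lemma multilinearN f p q x : multilinear_on fullv f ->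
  f (p ++ - x :: q) = - f (p ++ x :: q).
Proof.
move=> f_ml; rewrite -[- x]addr0 -scaleN1r f_ml ?inU_full ?memvf //.
by rewrite (multilinear_on0 f_ml) ?inU_full // addr0 mulN1r.
Qed.

Lemma multilinear_on_map U f (phi : H -> H) : multilinear_on U f ->
  (forall x, phi x \in U) -> linear phi ->
  multilinear_on fullv (fun s => f (map phi s)).
Proof.
move=> f_ml phiU phi_lin s1 s2 a x y _ _ _ _ /=.
by rewrite !map_cat /= phi_lin f_ml ?inU_map.
Qed.

Lemma multilinear_onD f g : multilinear_on fullv f -> multilinear_on fullv g ->
  multilinear_on fullv (fun s => f s + g s).
Proof. by move=> f_ml g_ml s1 s2 a x y *; rewrite f_ml // g_ml //; ring. Qed.

Lemma multilinear_onB f g : multilinear_on fullv f -> multilinear_on fullv g ->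
  multilinear_on fullv (fun s => f s - g s).
Proof. by move=> f_ml g_ml s1 s2 a x y *; rewrite f_ml // g_ml //; ring. Qed.

Lemma symmetric_on_swap U f p q x y : symmetric_on U f ->
  inU U p -> inU U q -> x \in U -> y \in U ->
  f (p ++ x :: y :: q) = f (p ++ y :: x :: q).
Proof.
move=> f_sym Up Uq Ux Uy; apply: f_sym; first by rewrite inU_cat_cons Up /= Ux Uy.
rewrite perm_cat2l -[x :: y :: q]/([:: x; y] ++ q) -[y :: x :: q]/([:: y; x] ++ q).
by rewrite perm_cat2r (perm_catC [:: x] [:: y]).
Qed.

Lemma symmetric_on_map U f (phi : H -> H) p q x y : symmetric_on U f ->
  (forall z, phi z \in U) ->
  f (map phi (p ++ x :: y :: q)) = f (map phi (p ++ y :: x :: q)).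
Proof. by move=> f_sym phiU; rewrite !map_cat /= (symmetric_on_swap f_sym) ?inU_map. Qed.

End MultilinearForms.

Section BraidedForms.
Variables (k : fieldType) (H : vectType k) (Hi Hv Hg : {vspace H}).
Hypothesis k_char0 : [pchar k] =i pred0.
Hypothesis td : triple_decomp Hi Hv Hg.
Variables (f : seq H -> k) (rho : H -> H).
Hypothesis f_ml : multilinear_on fullv f.
Hypothesis braid_e : forall s1 s2 v w, v \in (Hi + Hv)%VS ->
  f (s1 ++ v :: w :: s2) = f (s1 ++ w :: v :: s2).
Hypothesis braid_g : forall s1 s2 v w, v \in Hg ->
  f (s1 ++ v :: w :: s2) = f (s1 ++ rho w :: v :: s2).
Hypothesis rho_Hv : forall w, w \in Hv -> rho w = - w.

Local Notation pi := (pr_i Hi Hv Hg).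
Local Notation pv := (pr_v Hi Hv Hg).
Local Notation pg := (pr_g Hi Hv Hg).
Local Notation pe := (pr_e Hi Hv Hg).
Local Notation pG := (pr_G Hi Hv Hg).

Let Hv_He v : v \in Hv -> v \in (Hi + Hv)%VS := subvP (addvSr Hi Hv) v.

Lemma braid_to_front p s1 s2 v : v \in (Hi + Hv)%VS ->
  f (p ++ s1 ++ v :: s2) = f (p ++ v :: s1 ++ s2).
Proof.
move=> Hev; elim: s1 p => [|x s1 IH] p //=.
by rewrite -cat_rcons IH cat_rcons (braid_e _ _ _ Hev).
Qed.

(* Braiding [g] past [v] produces the sign [rho v = - v], while [v] commutes
   freely with [g]: the value equals its own opposite. *)
Lemma braid_gv_eq0 p q g v : g \in Hg -> v \in Hv -> f (p ++ g :: v :: q) = 0.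
Proof.
move=> Hg_g Hv_v; apply: (double_eq0 (V := k^o) k_char0).
by rewrite {1}braid_g // rho_Hv // multilinearN // (braid_e _ _ _ (Hv_He Hv_v)) addNr.
Qed.

Lemma braid_g_before_v q r g v : g \in q -> g \in Hg -> v \in Hv ->
  f (q ++ v :: r) = 0.
Proof.
move=> /splitPr[q1 q2] Hg_g Hv_v.
by rewrite -cat_rcons -catA braid_to_front ?Hv_He // cat_rcons braid_gv_eq0.
Qed.

Lemma braid_v_before_g q r v g : v \in q -> v \in Hv -> g \in Hg ->
  f (q ++ g :: r) = 0.
Proof.
move=> /splitPr[q1 q2] Hv_v Hg_g.
rewrite -catA /= -[q2 ++ _]cat_rcons -(braid_to_front _ _ _ (Hv_He Hv_v)) cat_rcons catA.
exact: braid_gv_eq0.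
Qed.

Lemma braid_after_v q s v : v \in q -> v \in Hv -> f (q ++ s) = f (q ++ map pe s).
Proof.
elim: s q => [|x s IH] q Vq Hv_v //=.
rewrite {1}(pr_e_pr_g td x) (multilinearD _ _ (pe x)) //.
rewrite (@braid_v_before_g q s _ (pg x) Vq Hv_v (pr_g_in x)).
by rewrite addr0 -!cat_rcons IH // mem_rcons inE Vq orbT.
Qed.

Lemma braid_after_g q s g : g \in q -> g \in Hg -> f (q ++ s) = f (q ++ map pG s).
Proof.
elim: s q => [|x s IH] q Gq Hg_g //=.
rewrite {1}(pr_G_pr_v td x) (multilinearD _ _ (pG x)) //.
rewrite (@braid_g_before_v q s _ (pv x) Gq Hg_g (pr_v_in x)).
by rewrite addr0 -!cat_rcons IH // mem_rcons inE Gq orbT.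
Qed.

Lemma braid_split_cat p s :
  f (p ++ s) = f (p ++ map pe s) + f (p ++ map pG s) - f (p ++ map pi s).
Proof.
elim: s p => [|x s IH] p /=; first by rewrite addrK.
have v_after : f (p ++ pv x :: s) = f (p ++ pv x :: map pe s).
  rewrite -!cat_rcons (@braid_after_v _ _ (pv x)) // ?pr_v_in //.
  by rewrite mem_rcons mem_head.
have g_after : f (p ++ pg x :: s) = f (p ++ pg x :: map pG s).
  rewrite -!cat_rcons (@braid_after_g _ _ (pg x)) // ?pr_g_in //.
  by rewrite mem_rcons mem_head.
rewrite {1}(pr_decomp td x) !multilinearD // -[p ++ pi x :: s]cat_rcons IH.
by rewrite !cat_rcons v_after g_after; ring.
Qed.

(* Inclusion-exclusion: no component of [f] mixes [Hv] and [Hg] slots. *)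
Lemma braid_split s : f s = f (map pe s) + f (map pG s) - f (map pi s).
Proof. exact: braid_split_cat [::] s. Qed.

End BraidedForms.

Section BilinearForms.
Variables (k : fieldType) (H : vectType k) (U : {vspace H}) (eta : H -> H -> k).
Hypothesis eta_bil : bilinear_on U eta.

Lemma bilinear_onDl x y z : x \in U -> y \in U -> z \in U ->
  eta (x + y) z = eta x z + eta y z.
Proof. by move=> *; rewrite -{1}(scale1r x) eta_bil.1 // mul1r. Qed.

Lemma bilinear_onDr x y z : x \in U -> y \in U -> z \in U ->
  eta z (x + y) = eta z x + eta z y.
Proof. by move=> *; rewrite -{1}(scale1r x) eta_bil.2 // mul1r. Qed.

Lemma bilinear_on0l z : z \in U -> eta 0 z = 0.
Proof.
move=> Uz; have := bilinear_onDl (mem0v U) (mem0v U) Uz.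
by rewrite addr0 => /eqP; rewrite -subr_eq subrr eq_sym => /eqP.
Qed.

Lemma bilinear_on0r z : z \in U -> eta z 0 = 0.
Proof.
move=> Uz; have := bilinear_onDr (mem0v U) (mem0v U) Uz.
by rewrite addr0 => /eqP; rewrite -subr_eq subrr eq_sym => /eqP.
Qed.

Lemma bilinear_onNl x z : x \in U -> z \in U -> eta (- x) z = - eta x z.
Proof.
move=> Ux Uz; rewrite -[- x]addr0 -scaleN1r eta_bil.1 ?mem0v //.
by rewrite bilinear_on0l // addr0 mulN1r.
Qed.

Lemma bilinear_onNr x z : x \in U -> z \in U -> eta z (- x) = - eta z x.
Proof.
move=> Ux Uz; rewrite -[- x]addr0 -scaleN1r eta_bil.2 ?mem0v //.
by rewrite bilinear_on0r // addr0 mulN1r.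
Qed.

End BilinearForms.

Lemma bilinear_on_map (k : fieldType) (H : vectType k) (U : {vspace H})
    (eta : H -> H -> k) (phi : H -> H) :
  bilinear_on U eta -> (forall x, phi x \in U) -> linear phi ->
  bilinear_on fullv (fun x y => eta (phi x) (phi y)).
Proof.
move=> [eta_l eta_r] phiU phi_lin.
by split=> a x y z _ _ _ /=; rewrite phi_lin ?eta_l ?eta_r.
Qed.

Lemma bilinear_onD (k : fieldType) (H : vectType k) (eta eta' : H -> H -> k) :
  bilinear_on fullv eta -> bilinear_on fullv eta' ->
  bilinear_on fullv (fun x y => eta x y + eta' x y).
Proof.
move=> [eta_l eta_r] [eta'_l eta'_r].
by split=> a x y z Ux Uy Uz; rewrite ?eta_l ?eta'_l ?eta_r ?eta'_r //; ring.
Qed.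

Lemma bilinear_onB (k : fieldType) (H : vectType k) (eta eta' : H -> H -> k) :
  bilinear_on fullv eta -> bilinear_on fullv eta' ->
  bilinear_on fullv (fun x y => eta x y - eta' x y).
Proof.
move=> [eta_l eta_r] [eta'_l eta'_r].
by split=> a x y z Ux Uy Uz; rewrite ?eta_l ?eta'_l ?eta_r ?eta'_r //; ring.
Qed.

Section FormalFrobeniusEq.
Variables (k : fieldType) (H : vectType k) (U : {vspace H}).
Variables (eta eta' : H -> H -> k) (Y Y' : seq H -> k).
Hypothesis eq_eta : forall x y, x \in U -> y \in U -> eta' x y = eta x y.
Hypothesis eq_Y : forall s, inU U s -> Y' s = Y s.

Lemma WDVV_on_eq : WDVV_on U eta Y -> WDVV_on U eta' Y'.
Proof.
move=> wdvv b c [b_basis size_c c_in dual] xs a1 a2 a3 a4 Uxs Ua.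
have b_in i : (i < size b)%N -> nth 0 b i \in U.
  by case/andP: b_basis => /eqP <- _ /(mem_nth 0) /memv_span.
have c_in_i i : (i < size b)%N -> nth 0 c i \in U.
  by rewrite -size_c => /(mem_nth 0) /(allP c_in).
have dual' : dual_bases_on U eta b c.
  by split=> // i j ib jb; rewrite -eq_eta ?b_in ?c_in_i ?dual.
move: Ua; rewrite /inU /= => /and5P[Ua1 Ua2 Ua3 Ua4 _].
have eq_term a b' (m : seq bool) (i : 'I_(size b)) :
    a \in U -> b' \in U ->
    Y' (a1 :: a :: mask m xs ++ [:: nth 0 b i]) *
    Y' (nth 0 c i :: mask (map negb m) xs ++ [:: b'; a4]) =
    Y (a1 :: a :: mask m xs ++ [:: nth 0 b i]) *
    Y (nth 0 c i :: mask (map negb m) xs ++ [:: b'; a4]).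
  move=> Ua Ub'; rewrite !eq_Y // /inU /= !all_cat /= ?Ua1 ?Ua ?Ub' ?Ua4 ?b_in ?c_in_i //=;
    by rewrite andbT; apply/allP => z /mem_mask /(allP Uxs).
under eq_bigr do under eq_bigr do rewrite eq_term //.
rewrite (wdvv b c dual' xs a1 a2 a3 a4) //; last by rewrite /inU /= Ua1 Ua2 Ua3 Ua4.
by under [RHS]eq_bigr do under eq_bigr do rewrite eq_term //.
Qed.

Lemma formal_frobenius_on_eq :
  formal_frobenius_on U eta Y -> formal_frobenius_on U eta' Y'.
Proof.
case=> [[eta_l eta_r] eta_sym eta_nd [Y_ml Y_sym Y_small] wdvv]; split.
- by split=> a x y z Ux Uy Uz; rewrite !eq_eta ?memvD ?memvZ // ?eta_l ?eta_r.
- by move=> x y Ux Uy; rewrite !eq_eta // eta_sym.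
- by move=> x Ux x_orth; apply: (eta_nd x Ux) => y Uy; rewrite -eq_eta // x_orth.
- split.
  + move=> s1 s2 a x y Us1 Us2 Ux Uy.
    by rewrite !eq_Y ?Y_ml // inU_cat_cons Us1 Us2 ?Ux ?Uy ?memvD ?memvZ.
  + by move=> s t Us st; rewrite !eq_Y ?(Y_sym s t) // /inU -(perm_all _ st).
  + by move=> s Us small; rewrite eq_Y // Y_small.
- exact: WDVV_on_eq.
Qed.

End FormalFrobeniusEq.

Section GluingForward.
Variables (k : fieldType) (H : vectType k) (Hi Hv Hg : {vspace H}).
Hypothesis k_char0 : [pchar k] =i pred0.
Hypothesis td : triple_decomp Hi Hv Hg.
Variables (etae etaG : H -> H -> k) (Ye YG : seq H -> k).
Hypothesis Fe : formal_frobenius_on (Hi + Hv)%VS etae Ye.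
Hypothesis FG : formal_frobenius_on (Hi + Hg)%VS etaG YG.
Hypothesis eq_Y_i : forall s, inU Hi s -> Ye s = YG s.
Hypothesis eq_eta_i : forall x y, x \in Hi -> y \in Hi -> etae x y = etaG x y.
Hypothesis hom : eta_homogeneous Hi Hv Hg etae etaG.

Local Notation He := (Hi + Hv)%VS.
Local Notation HG := (Hi + Hg)%VS.
Local Notation pi := (pr_i Hi Hv Hg).
Local Notation pv := (pr_v Hi Hv Hg).
Local Notation pg := (pr_g Hi Hv Hg).
Local Notation pe := (pr_e Hi Hv Hg).
Local Notation pG := (pr_G Hi Hv Hg).
Local Notation rho := (glue_rho Hi Hv Hg).
Local Notation M := (glue_met Hi Hv Hg etae etaG).
Local Notation P := (glue_pot Hi Hv Hg Ye YG).

Let pi_He x : pi x \in He := pr_i_in_e x.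
Let pv_He x : pv x \in He := pr_v_in_e x.
Let pe_He x : pe x \in He := pr_e_in x.
Let pi_HG x : pi x \in HG := pr_i_in_G x.
Let pg_HG x : pg x \in HG := pr_g_in_G x.
Let pG_HG x : pG x \in HG := pr_G_in x.

Let pi_lin : linear pi. Proof. by move=> a x y; rewrite linearP. Qed.

Let etae_bil : bilinear_on He etae. Proof. by case: Fe. Qed.
Let etaG_bil : bilinear_on HG etaG. Proof. by case: FG. Qed.
Let etae_sym : symmetric_bil_on He etae. Proof. by case: Fe. Qed.
Let etaG_sym : symmetric_bil_on HG etaG. Proof. by case: FG. Qed.
Let etae_nd : nondeg_on He etae. Proof. by case: Fe. Qed.
Let etaG_nd : nondeg_on HG etaG. Proof. by case: FG. Qed.
Let Ye_pot : potential_on He Ye. Proof. by case: Fe. Qed.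
Let YG_pot : potential_on HG YG. Proof. by case: FG. Qed.

Lemma glue_met_components x y :
  M x y = etae (pi x) (pi y) + etae (pv x) (pv y) + etaG (pg x) (pg y).
Proof.
case: hom => Ei Ev Eg; rewrite /glue_met Ei Ev Eg /etai_of /etav_of /etag_of /pr_e /pr_G.
rewrite !(pr_ii td, pr_iv td, pr_vv td, pr_ig td, pr_gg td) !add0r.
by rewrite (bilinear_on0l etae_bil (mem0v _)) (bilinear_on0l etaG_bil (mem0v _)) !subr0.
Qed.

Lemma etae_orth a b : a \in Hi -> b \in Hv -> etae a b = 0.
Proof.
move=> Ha Hb; case: hom => _ + _ => /(_ a b); rewrite /etav_of /pr_e.
have [Eia Eva _] := pr_on_i td Ha; have [Eib Evb _] := pr_on_v td Hb.
rewrite !(Eia, Eva, Eib, Evb, linear0, addr0, add0r).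
have Hea : a \in He := subvP (addvSl _ _) _ Ha.
have Heb : b \in He := subvP (addvSr _ _) _ Hb.
rewrite (bilinear_on0r etae_bil Hea) (bilinear_on0l etae_bil Heb).
by rewrite (bilinear_on0r etae_bil (mem0v _)) !subr0.
Qed.

Lemma etaG_orth a c : a \in Hi -> c \in Hg -> etaG a c = 0.
Proof.
move=> Ha Hc; case: hom => _ _ /(_ a c); rewrite /etag_of /pr_G.
have [Eia _ Ega] := pr_on_i td Ha; have [Eic _ Egc] := pr_on_g td Hc.
rewrite !(Eia, Ega, Eic, Egc, linear0, addr0, add0r).
have HGa : a \in HG := subvP (addvSl _ _) _ Ha.
have HGc : c \in HG := subvP (addvSr _ _) _ Hc.
rewrite (bilinear_on0r etaG_bil HGa) (bilinear_on0l etaG_bil HGc).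
by rewrite (bilinear_on0r etaG_bil (mem0v _)) !subr0.
Qed.

Lemma glue_met_bilinear : bilinear_on fullv M.
Proof.
have [M_l M_r] := bilinear_onB
  (bilinear_onD (bilinear_on_map etae_bil pe_He (pr_e_linear (Hg := Hg)))
                (bilinear_on_map etaG_bil pG_HG (pr_G_linear (Hv := Hv))))
  (bilinear_on_map etaG_bil pi_HG pi_lin).
split=> a x y z *; rewrite !glue_metE.
  exact: M_l a x y z (memvf _) (memvf _) (memvf _).
exact: M_r a x y z (memvf _) (memvf _) (memvf _).
Qed.

Lemma glue_met_sym : symmetric_bil_on fullv M.
Proof.
move=> x y _ _; rewrite !glue_met_components.
by rewrite etae_sym ?pi_He // (etae_sym (pv_He _)) ?pv_He // etaG_sym ?pg_HG.
Qed.

Lemma glue_met_pr_i x z : z \in He -> M x (pi z) = etae (pi x) z.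
Proof.
move=> Hez; rewrite -{2}(pr_e_id td Hez) /pr_e.
rewrite (bilinear_onDr etae_bil) ?pi_He ?pv_He // (etae_orth (pr_i_in x) (pr_v_in z)).
rewrite glue_met_components (pr_ii td) (pr_vi td) (pr_gi td).
by rewrite (bilinear_on0r etae_bil (pv_He x)) (bilinear_on0r etaG_bil (pg_HG x)) !addr0.
Qed.

Lemma glue_met_pr_v x z : z \in He -> M x (pv z) = etae (pv x) z.
Proof.
move=> Hez; rewrite -{2}(pr_e_id td Hez) /pr_e.
rewrite (bilinear_onDr etae_bil) ?pi_He ?pv_He // etae_sym ?pv_He ?pi_He //.
rewrite (etae_orth (pr_i_in z) (pr_v_in x)) glue_met_components.
rewrite (pr_iv td) (pr_vv td) (pr_gv td).
rewrite (bilinear_on0r etae_bil (pi_He x)) (bilinear_on0r etaG_bil (pg_HG x)).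
by rewrite addr0 !add0r.
Qed.

Lemma glue_met_pr_g x z : z \in HG -> M x (pg z) = etaG (pg x) z.
Proof.
move=> HGz; rewrite -{2}(pr_G_id td HGz) /pr_G.
rewrite (bilinear_onDr etaG_bil) ?pi_HG ?pg_HG // etaG_sym ?pg_HG ?pi_HG //.
rewrite (etaG_orth (pr_i_in z) (pr_g_in x)) glue_met_components.
rewrite (pr_ig td) (pr_vg td) (pr_gg td).
by rewrite (bilinear_on0r etae_bil (pi_He x)) (bilinear_on0r etae_bil (pv_He x)) !add0r.
Qed.

Lemma glue_met_nondeg : nondeg_on fullv M.
Proof.
move=> x _ x_orth.
have pi0 : pi x = 0.
  by apply: etae_nd (pi_He x) _ => z Hez; rewrite -glue_met_pr_i ?x_orth ?memvf.
have pv0 : pv x = 0.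
  by apply: etae_nd (pv_He x) _ => z Hez; rewrite -glue_met_pr_v ?x_orth ?memvf.
have pg0 : pg x = 0.
  by apply: etaG_nd (pg_HG x) _ => z HGz; rewrite -glue_met_pr_g ?x_orth ?memvf.
by rewrite (pr_decomp td x) pi0 pv0 pg0 !addr0.
Qed.

Lemma glue_met_rho x y : M (rho x) (rho y) = M x y.
Proof.
rewrite !glue_met_components.
have [-> -> ->] := pr_glue_rho td x; have [-> -> ->] := pr_glue_rho td y.
rewrite (bilinear_onNl etae_bil) ?memvN ?pv_He //.
by rewrite (bilinear_onNr etae_bil) ?pv_He // opprK.
Qed.

Lemma glue_met_orth x y : x \in He -> y \in Hg -> M x y = 0.
Proof.
rewrite (mem_He td) => /eqP pg0 Hy; have [Eiy Evy _] := pr_on_g td Hy.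
rewrite glue_met_components pg0 Eiy Evy.
rewrite (bilinear_on0r etae_bil (pi_He x)) (bilinear_on0r etae_bil (pv_He x)).
by rewrite (bilinear_on0l etaG_bil (pg_HG y)) !addr0.
Qed.

Lemma glue_pot_multilinear : multilinear_on fullv P.
Proof.
case: Ye_pot => [Ye_ml _ _]; case: YG_pot => [YG_ml _ _].
apply: multilinear_onD; first apply: multilinear_onD.
- exact: multilinear_on_map Ye_ml pi_He pi_lin.
- apply: multilinear_onB; last exact: multilinear_on_map Ye_ml pi_He pi_lin.
  exact: multilinear_on_map Ye_ml pe_He pr_e_linear.
- apply: multilinear_onB; last exact: multilinear_on_map YG_ml pi_HG pi_lin.
  exact: multilinear_on_map YG_ml pG_HG pr_G_linear.
Qed.

Lemma glue_pot_small s : (size s < 3)%N -> P s = 0.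
Proof.
case: Ye_pot => [_ _ Ye_small]; case: YG_pot => [_ _ YG_small] small_s.
rewrite glue_potE Ye_small ?YG_small ?size_map ?addr0 ?subrr //.
- exact: inU_map _ pi_HG.
- exact: inU_map _ pG_HG.
- exact: inU_map _ pe_He.
Qed.

Lemma glue_pot_swap p q v w : P (p ++ v :: w :: q) = P (p ++ w :: v :: q).
Proof.
case: Ye_pot => [_ Ye_sym _]; case: YG_pot => [_ YG_sym _].
rewrite !glue_potE (symmetric_on_map p q v w Ye_sym pe_He).
by rewrite (symmetric_on_map p q v w YG_sym pG_HG) (symmetric_on_map p q v w YG_sym pi_HG).
Qed.

(* Both sides have no [Ye]-part since [pe v = 0], and [rho] only changes the
   [Hv]-component, which is invisible to [pG] and [pi]. *)
Lemma glue_pot_braid_g p q v w : v \in Hg ->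
  P (p ++ v :: w :: q) = P (p ++ rho w :: v :: q).
Proof.
move=> Hg_v; have [Eiv Evv Egv] := pr_on_g td Hg_v.
have pe_v : pe v = 0 by rewrite /pr_e Eiv Evv addr0.
have pG_v : pG v = v by rewrite /pr_G Eiv Egv add0r.
have [Eirho _ Egrho] := pr_glue_rho td w.
have pG_rho : pG (rho w) = pG w by rewrite /pr_G Eirho Egrho.
case: Ye_pot => [Ye_ml _ _]; case: YG_pot => [_ YG_sym _].
have He_pe s : inU He (map pe s) := inU_map s pe_He.
rewrite !glue_potE !map_cat /= pe_v pG_v Eiv pG_rho Eirho.
rewrite (multilinear_on0 Ye_ml (He_pe p) (He_pe (w :: q))).
rewrite -[_ ++ [:: pe (rho w), 0 & _]]cat_rcons -map_rcons.
rewrite (multilinear_on0 Ye_ml (He_pe _) (He_pe q)).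
have HG_v : v \in HG := subvP (addvSr _ _) _ Hg_v.
rewrite (symmetric_on_swap YG_sym (inU_map _ pG_HG) (inU_map _ pG_HG) HG_v (pG_HG w)).
by rewrite (symmetric_on_swap YG_sym (inU_map _ pi_HG) (inU_map _ pi_HG) (mem0v _)
  (pi_HG w)).
Qed.

Lemma fixed_space_glue_rho : fixed_space rho = HG.
Proof.
apply/vspaceP => x; rewrite (mem_HG td) mem_fixed_space.
have [_ Evrho _] := pr_glue_rho td x.
apply/eqP/eqP => [rho_x | pv0].
  by apply: (double_eq0 k_char0); rewrite -{1}rho_x Evrho addNr.
by rewrite glue_rhoE pv0 subr0 [RHS](pr_decomp td) pv0 addr0.
Qed.

Lemma glue_met_on_He x y : x \in He -> y \in He -> M x y = etae x y.
Proof.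
move=> Hex Hey; rewrite glue_metE (pr_e_id td Hex) (pr_e_id td Hey).
by rewrite (pr_G_on_e td Hex) (pr_G_on_e td Hey) addrK.
Qed.

Lemma glue_met_on_HG x y : x \in HG -> y \in HG -> M x y = etaG x y.
Proof.
move=> HGx HGy; rewrite glue_metE (pr_e_on_G td HGx) (pr_e_on_G td HGy).
by rewrite (pr_G_id td HGx) (pr_G_id td HGy) eq_eta_i ?pr_i_in // addrAC subrr add0r.
Qed.

Lemma glue_pot_on_He s : inU He s -> P s = Ye s.
Proof.
move=> Hes; have pe_s : map pe s = s.
  by apply: map_id_in => z /(allP Hes) /(pr_e_id td).
have pG_s : map pG s = map pi s.
  by apply/eq_in_map => z /(allP Hes) /(pr_G_on_e td).
by rewrite glue_potE pe_s pG_s addrK.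
Qed.

Lemma glue_pot_on_HG s : inU HG s -> P s = YG s.
Proof.
move=> HGs; have pG_s : map pG s = s.
  by apply: map_id_in => z /(allP HGs) /(pr_G_id td).
have pe_s : map pe s = map pi s.
  by apply/eq_in_map => z /(allP HGs) /(pr_e_on_G td).
rewrite glue_potE pG_s pe_s eq_Y_i; last exact: inU_map _ pr_i_in.
by rewrite addrAC subrr add0r.
Qed.

Lemma glue_pre_Z2_frobenius :
  Gdegree_e He Hg P -> pre_Z2_frobenius He Hg rho M P.
Proof.
move=> P_Gdeg; have rho_Hg x : x \in Hg -> rho x = x.
  by move=> Hg_x; have [Ei Ev Eg] := pr_on_g td Hg_x; rewrite glue_rhoE Ei Ev Eg subr0 add0r.
split.
- by split; [apply/directv_addP; rewrite capvC triple_cap_g | case: td].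
- split=> [x | x | x /rho_Hg -> //].
    by rewrite glue_rhoE; have [-> -> ->] := pr_glue_rho td x; rewrite opprK -pr_decomp.
  by rewrite !(mem_He td); have [_ _ ->] := pr_glue_rho td x.
- split=> //; split; [exact: glue_met_bilinear | exact: glue_met_sym |
    exact: glue_met_nondeg | exact: glue_met_rho | exact: glue_met_orth].
- by split; [exact: glue_pot_multilinear | exact: glue_pot_small |
    move=> *; exact: glue_pot_swap | exact: glue_pot_braid_g | ].
- split; first exact: formal_frobenius_on_eq glue_met_on_He glue_pot_on_He Fe.
  rewrite fixed_space_glue_rho.
  exact: formal_frobenius_on_eq glue_met_on_HG glue_pot_on_HG FG.
Qed.

End GluingForward.

Definition neg_space (k : fieldType) (H : vectType k) (rho : 'End(H)) : {vspace H} :=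
  lker (rho + \1%VF)%R.

Lemma mem_neg_space (k : fieldType) (H : vectType k) (rho : 'End(H)) x :
  (x \in neg_space rho) = (rho x == - x).
Proof. by rewrite memv_ker add_lfunE id_lfunE addr_eq0. Qed.

Section Eigensplitting.
Variables (k : fieldType) (H : vectType k).
Hypothesis k_char0 : [pchar k] =i pred0.
Variables (H0 H1 : {vspace H}) (rho : 'End(H)).
Hypothesis H01_direct : directv (H0 + H1).
Hypothesis H01_full : (H0 + H1)%VS = fullv.
Hypothesis rho_invol : forall x, rho (rho x) = x.
Hypothesis rho_H0 : forall x, x \in H0 -> rho x \in H0.
Hypothesis rho_H1 : forall x, x \in H1 -> rho x = x.

Definition H0_fixed := (H0 :&: fixed_space rho)%VS.
Definition H0_neg := (H0 :&: neg_space rho)%VS.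

Local Notation Hi := H0_fixed.
Local Notation Hv := H0_neg.

Lemma H0_fixed_sub x : x \in Hi -> x \in H0. Proof. by case/memv_capP. Qed.
Lemma H0_neg_sub x : x \in Hv -> x \in H0. Proof. by case/memv_capP. Qed.

Lemma H0_fixedP x : x \in Hi -> rho x = x.
Proof. by case/memv_capP => _; rewrite mem_fixed_space => /eqP. Qed.

Lemma H0_negP x : x \in Hv -> rho x = - x.
Proof. by case/memv_capP => _; rewrite mem_neg_space => /eqP. Qed.

Lemma H0_eigen_split x : x \in H0 ->
  exists a b, [/\ a \in Hi, b \in Hv & x = a + b].
Proof.
move=> H0x; have two_neq0 : (2%:R : k) != 0 by move/pcharf0P: k_char0 => ->.
exists (2%:R^-1 *: (x + rho x)), (2%:R^-1 *: (x - rho x)); split.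
- rewrite memv_cap memvZ ?memvD ?rho_H0 //= mem_fixed_space.
  by rewrite linearZ linearD /= rho_invol addrC.
- rewrite memv_cap memvZ ?memvB ?rho_H0 //= mem_neg_space.
  by rewrite linearZ linearB /= rho_invol -scalerN opprB.
- rewrite -scalerDr addrACA subrr addr0 -mulr2n -scaler_nat scalerA.
  by rewrite mulVf // scale1r.
Qed.

Lemma H01_split x : exists x0 x1, [/\ x0 \in H0, x1 \in H1 & x = x0 + x1].
Proof.
have : x \in (H0 + H1)%VS by rewrite H01_full memvf.
by case/memv_addP => x0 H0x [x1 H1x ->]; exists x0, x1.
Qed.

Lemma H0_fixed_add_neg : (Hi + Hv)%VS = H0.
Proof.
apply/vspaceP => x; apply/idP/idP => [/memv_addP[a Ha [b Hb ->]] | H0x].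
  by apply: memvD; [apply: H0_fixed_sub | apply: H0_neg_sub].
by have [a [b [Ha Hb ->]]] := H0_eigen_split H0x; apply: memv_add.
Qed.

Lemma eigen_triple_decomp : triple_decomp Hi Hv H1.
Proof.
split; last first.
  apply/vspaceP => x; rewrite memvf; have [x0 [x1 [H0x H1x ->]]] := H01_split x.
  by rewrite memv_add // H0_fixed_add_neg.
have Hiv_direct : directv (Hi + Hv).
  apply/directv_addP/eqP; rewrite -subv0; apply/subvP => x /memv_capP[Hix Hvx].
  rewrite memv0; apply/eqP/(double_eq0 k_char0).
  by rewrite -{1}(H0_fixedP Hix) (H0_negP Hvx) addNr.
rewrite directv_addE; apply/and3P; split=> //=; first exact: directv_trivial.
by rewrite H0_fixed_add_neg; apply/eqP/directv_addP.
Qed.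

Lemma H0_fixed_add_H1 : (Hi + H1)%VS = fixed_space rho.
Proof.
apply/vspaceP => x; apply/idP/idP => [/memv_addP[a Ha [c Hc ->]] | ].
  by rewrite mem_fixed_space linearD /= H0_fixedP // rho_H1.
rewrite mem_fixed_space => /eqP rho_x; have [x0 [x1 [H0x H1x Ex]]] := H01_split x.
rewrite Ex memv_add // memv_cap H0x mem_fixed_space /=.
by move: rho_x; rewrite Ex linearD /= (rho_H1 H1x) => /addIr ->.
Qed.

Local Notation pi := (pr_i Hi Hv H1).
Local Notation pv := (pr_v Hi Hv H1).
Local Notation pg := (pr_g Hi Hv H1).
Local Notation pe := (pr_e Hi Hv H1).
Local Notation pG := (pr_G Hi Hv H1).

Lemma rho_glue x : rho x = glue_rho Hi Hv H1 x.
Proof.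
rewrite glue_rhoE {1}(pr_decomp eigen_triple_decomp x) !linearD /=.
by rewrite H0_fixedP ?pr_i_in // H0_negP ?pr_v_in // rho_H1 ?pr_g_in.
Qed.

Lemma pr_i_in_H0 x : pi x \in H0. Proof. exact: H0_fixed_sub (pr_i_in x). Qed.
Lemma pr_e_in_H0 x : pe x \in H0. Proof. by rewrite -H0_fixed_add_neg pr_e_in. Qed.
Lemma pr_G_in_fixed x : pG x \in fixed_space rho.
Proof. by rewrite -H0_fixed_add_H1 pr_G_in. Qed.

Lemma glue_met_congr (eta eta' : H -> H -> k) :
  (forall x y, x \in H0 -> y \in H0 -> eta' x y = eta x y) ->
  (forall x y, x \in fixed_space rho -> y \in fixed_space rho -> eta' x y = eta x y) ->
  forall x y, glue_met Hi Hv H1 eta' eta' x y = glue_met Hi Hv H1 eta eta x y.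
Proof.
move=> eq_H0 eq_fixed x y; rewrite !glue_metE.
rewrite (eq_H0 _ _ (pr_e_in_H0 x) (pr_e_in_H0 y)) (eq_H0 _ _ (pr_i_in_H0 x) (pr_i_in_H0 y)).
by rewrite (eq_fixed _ _ (pr_G_in_fixed x) (pr_G_in_fixed y)).
Qed.

Lemma glue_pot_congr (Y Y' : seq H -> k) :
  (forall s, inU H0 s -> Y' s = Y s) ->
  (forall s, inU (fixed_space rho) s -> Y' s = Y s) ->
  forall s, glue_pot Hi Hv H1 Y' Y' s = glue_pot Hi Hv H1 Y Y s.
Proof.
move=> eq_H0 eq_fixed s; rewrite !glue_potE.
rewrite (eq_H0 _ (inU_map s pr_e_in_H0)) (eq_H0 _ (inU_map s pr_i_in_H0)).
by rewrite (eq_fixed _ (inU_map s pr_G_in_fixed)).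
Qed.

Section Metric.
Variable eta : H -> H -> k.
Hypothesis eta_bil : bilinear_on fullv eta.
Hypothesis eta_sym : symmetric_bil_on fullv eta.
Hypothesis eta_rho : forall x y, eta (rho x) (rho y) = eta x y.
Hypothesis eta_H01 : forall x y, x \in H0 -> y \in H1 -> eta x y = 0.

Let etaDl x y z : eta (x + y) z = eta x z + eta y z.
Proof. by rewrite (bilinear_onDl eta_bil) ?memvf. Qed.
Let etaDr x y z : eta z (x + y) = eta z x + eta z y.
Proof. by rewrite (bilinear_onDr eta_bil) ?memvf. Qed.
Let etaC x y : eta x y = eta y x.
Proof. by rewrite eta_sym ?memvf. Qed.

Lemma eta_fixed_neg a b : a \in Hi -> b \in Hv -> eta a b = 0.
Proof.
move=> Ha Hb; apply: (double_eq0 (V := k^o) k_char0); have := eta_rho a b.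
rewrite (H0_fixedP Ha) (H0_negP Hb) (bilinear_onNr eta_bil (memvf b) (memvf a)) => E.
by rewrite -{1}E addNr.
Qed.

Lemma eta_H10 x y : x \in H1 -> y \in H0 -> eta x y = 0.
Proof. by move=> H1x H0y; rewrite etaC eta_H01. Qed.

Lemma eta_pr_e x y : eta (pe x) (pe y) = eta (pi x) (pi y) + eta (pv x) (pv y).
Proof.
rewrite /pr_e etaDl 2!etaDr (eta_fixed_neg (pr_i_in x) (pr_v_in y)).
by rewrite (etaC (pv x)) (eta_fixed_neg (pr_i_in y) (pr_v_in x)) addr0 add0r.
Qed.

Lemma eta_pr_G x y : eta (pG x) (pG y) = eta (pi x) (pi y) + eta (pg x) (pg y).
Proof.
rewrite /pr_G etaDl 2!etaDr.
rewrite (eta_H01 (pr_i_in_H0 x) (pr_g_in y)) (eta_H10 (pr_g_in x) (pr_i_in_H0 y)).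
by rewrite addr0 add0r.
Qed.

Lemma eta_components x y :
  eta x y = eta (pi x) (pi y) + eta (pv x) (pv y) + eta (pg x) (pg y).
Proof.
rewrite {1}(pr_e_pr_g eigen_triple_decomp x) {1}(pr_e_pr_g eigen_triple_decomp y).
rewrite etaDl 2!etaDr.
rewrite (eta_H01 (pr_e_in_H0 x) (pr_g_in y)) (eta_H10 (pr_g_in x) (pr_e_in_H0 y)).
by rewrite eta_pr_e addr0 add0r.
Qed.

Lemma eta_glued :
  eta_homogeneous Hi Hv H1 eta eta /\ (forall x y, eta x y = glue_met Hi Hv H1 eta eta x y).
Proof.
have td := eigen_triple_decomp; split.
- split=> x y; rewrite /etai_of /etav_of /etag_of.
  + by rewrite !(pr_ii td).
  + by rewrite !eta_pr_e !(pr_iv td) !(pr_vv td); ring.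
  + by rewrite !eta_pr_G !(pr_ig td) !(pr_gg td); ring.
- by move=> x y; rewrite glue_metE eta_pr_e eta_pr_G eta_components; ring.
Qed.

End Metric.

Lemma pot_glued (Y : seq H -> k) : multilinear_on fullv Y ->
  (forall s1 s2 v w, v \in H0 -> Y (s1 ++ v :: w :: s2) = Y (s1 ++ w :: v :: s2)) ->
  (forall s1 s2 v w, v \in H1 -> Y (s1 ++ v :: w :: s2) = Y (s1 ++ rho w :: v :: s2)) ->
  forall s, Y s = glue_pot Hi Hv H1 Y Y s.
Proof.
move=> Y_ml Y_braid_e Y_braid_g s; rewrite glue_potE.
apply: (braid_split (rho := rho) k_char0 eigen_triple_decomp Y_ml) => [s1 s2 v w|//|w].
  by rewrite H0_fixed_add_neg; apply: Y_braid_e.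
exact: H0_negP.
Qed.

End Eigensplitting.

Section PreZ2FrobeniusStructure.
Variables (k : fieldType) (H : vectType k).
Hypothesis k_char0 : [pchar k] =i pred0.
Variables (H0 H1 : {vspace H}) (rho : 'End(H)) (eta : H -> H -> k) (Y : seq H -> k).
Hypothesis pZ2 : pre_Z2_frobenius H0 H1 rho eta Y.

Local Notation Hi := (H0_fixed H0 rho).
Local Notation Hv := (H0_neg H0 rho).

Let H01_direct : directv (H0 + H1). Proof. by case: pZ2 => [[]]. Qed.
Let H01_full : (H0 + H1)%VS = fullv. Proof. by case: pZ2 => [[]]. Qed.
Let rho_invol x : rho (rho x) = x. Proof. by case: pZ2 => _ [invol _ _] _ _ _. Qed.
Let rho_H0 x : x \in H0 -> rho x \in H0.
Proof. by case: pZ2 => _ [_ rho0 _] _ _ _; apply: rho0. Qed.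
Let rho_H1 x : x \in H1 -> rho x = x.
Proof. by case: pZ2 => _ _ [rho1 _] _ _; apply: rho1. Qed.

Let pre_Z2_eta_glued eta' Y' : pre_Z2_frobenius H0 H1 rho eta' Y' ->
  eta_homogeneous Hi Hv H1 eta' eta' /\
  (forall x y, eta' x y = glue_met Hi Hv H1 eta' eta' x y).
Proof.
case=> _ _ [_ [eta_bil eta_sym _ eta_rho eta_H01]] _ _.
exact: eta_glued eta_bil eta_sym eta_rho eta_H01.
Qed.

Let pre_Z2_pot_glued eta' Y' : pre_Z2_frobenius H0 H1 rho eta' Y' ->
  forall s, Y' s = glue_pot Hi Hv H1 Y' Y' s.
Proof.
case=> _ _ _ [Y_ml _ Y_braid_e Y_braid_g _] _.
exact: pot_glued Y_ml Y_braid_e Y_braid_g.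
Qed.

Lemma pre_Z2_frobenius_glued :
  [/\ triple_decomp Hi Hv H1, (Hi + Hv)%VS = H0 /\ H1 = H1,
      (Hi + H1)%VS = fixed_space rho /\ (forall x, rho x = glue_rho Hi Hv H1 x),
      eta_homogeneous Hi Hv H1 eta eta /\
      (forall x y, eta x y = glue_met Hi Hv H1 eta eta x y) &
      (forall s, Y s = glue_pot Hi Hv H1 Y Y s)].
Proof.
split; [exact: eigen_triple_decomp | by rewrite H0_fixed_add_neg | | | ].
- by rewrite H0_fixed_add_H1 //; split=> // x; apply: rho_glue.
- exact: pre_Z2_eta_glued pZ2.
- exact: pre_Z2_pot_glued pZ2.
Qed.

Lemma pre_Z2_frobenius_unique eta' Y' :
  pre_Z2_frobenius H0 H1 rho eta' Y' ->
  (forall x y, x \in H0 -> y \in H0 -> eta' x y = eta x y) ->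
  (forall x y, x \in fixed_space rho -> y \in fixed_space rho -> eta' x y = eta x y) ->
  (forall s, inU H0 s -> Y' s = Y s) ->
  (forall s, inU (fixed_space rho) s -> Y' s = Y s) ->
  (forall x y, eta' x y = eta x y) /\ (forall s, Y' s = Y s).
Proof.
move=> pZ2' eta_H0 eta_fixed Y_H0 Y_fixed; split.
  move=> x y; rewrite (pre_Z2_eta_glued pZ2').2 (pre_Z2_eta_glued pZ2).2.
  exact: glue_met_congr.
move=> s; rewrite (pre_Z2_pot_glued pZ2') (pre_Z2_pot_glued pZ2).
exact: glue_pot_congr.
Qed.

End PreZ2FrobeniusStructure.

Unset Implicit Arguments.

Theorem theorem5p3 (k : fieldType) (Hchar : [pchar k] =i pred0)
    (H : vectType k) :
  (* forward direction *)
  (forall (Hi Hv Hg : {vspace H}) (etae etaG : H -> H -> k)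
          (Ye YG : seq H -> k),
     triple_decomp Hi Hv Hg ->
     formal_frobenius_on (Hi + Hv)%VS etae Ye ->
     formal_frobenius_on (Hi + Hg)%VS etaG YG ->
     (forall s, inU Hi s -> Ye s = YG s) ->
     (forall x y, x \in Hi -> y \in Hi -> etae x y = etaG x y) ->
     Gdegree_e (Hi + Hv)%VS Hg (glue_pot Hi Hv Hg Ye YG) ->
     eta_homogeneous Hi Hv Hg etae etaG ->
     pre_Z2_frobenius (Hi + Hv)%VS Hg (glue_rho Hi Hv Hg)
       (glue_met Hi Hv Hg etae etaG) (glue_pot Hi Hv Hg Ye YG))
  /\
  (* converse and uniqueness *)
  (forall (H0 H1 : {vspace H}) (rho : 'End(H)) (eta : H -> H -> k)
          (Y : seq H -> k),
     pre_Z2_frobenius H0 H1 rho eta Y ->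
     (exists Hi Hv Hg : {vspace H},
        [/\ triple_decomp Hi Hv Hg, (Hi + Hv)%VS = H0 /\ Hg = H1,
            (Hi + Hg)%VS = fixed_space rho /\
            (forall x, rho x = glue_rho Hi Hv Hg x),
            eta_homogeneous Hi Hv Hg eta eta /\
            (forall x y, eta x y = glue_met Hi Hv Hg eta eta x y) &
            (forall s, Y s = glue_pot Hi Hv Hg Y Y s)])
     /\
     (forall (eta' : H -> H -> k) (Y' : seq H -> k),
        pre_Z2_frobenius H0 H1 rho eta' Y' ->
        (forall x y, x \in H0 -> y \in H0 -> eta' x y = eta x y) ->
        (forall x y, x \in fixed_space rho -> y \in fixed_space rho ->
           eta' x y = eta x y) ->
        (forall s, inU H0 s -> Y' s = Y s) ->
        (forall s, inU (fixed_space rho) s -> Y' s = Y s) ->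
        (forall x y, eta' x y = eta x y) /\ (forall s, Y' s = Y s))).
Proof.
split.
  move=> Hi Hv Hg etae etaG Ye YG td Fe FG eq_Y eq_eta Gdeg hom.
  exact: (glue_pre_Z2_frobenius Hchar td Fe FG eq_Y eq_eta hom Gdeg).
move=> H0 H1 rho eta Y pZ2; split.
  by exists (H0_fixed H0 rho), (H0_neg H0 rho), H1; apply: pre_Z2_frobenius_glued.
exact: pre_Z2_frobenius_unique.
Qed.
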